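(* Let $m\ge5$ be an odd integer and $h\ge1$ an integer, and set $n'=2^{m+h-2}-2^{m-2}-2^{\frac{m-1}{2}}$. Let $\mathbf{C}_0$ be a projective binary linear $[2^{m-2},m-1,2^{m-3}-2^{\frac{m-3}{2}}]_2$ code with maximum weight $2^{m-3}+2^{\frac{m-3}{2}}$, and let $\mathbf{C}_1$ be its simplex complementary code of dimension $m+h-1$, a $[2^{m+h-1}-2^{m-2}-1,\ m+h-1,\ 2^{m+h-2}-2^{m-3}-2^{\frac{m-3}{2}}]_2$ code with maximum weight $2^{m+h-2}$. Then the code $\mathbf{C}'$ obtained from $\mathbf{C}_1$ by the extension construction is a minimal binary linear $[2^{m+h-1}-2^{m-2}-1+n',\ m+h-1,\ 2^{m+h-2}-2^{m-3}-2^{\frac{m-3}{2}}]_2$ code with maximum weight $2^{m+h-1}-2^{m-2}-2^{\frac{m-1}{2}}$ (that is, $2^{m+h-2}+n'$), and it violates the Ashikhmin–Barg condition.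
   Context: Projective code: columns of a generator matrix are nonzero and pairwise distinct (binary case). Simplex complementary code of dimension $K=k+h$ of a projective binary $[n,k]$ code: append $h$ zeros to the columns of a generator matrix and take the code generated by the matrix whose columns are all nonzero vectors of $\mathbf{F}_2^K$ other than these $n$. Extension construction for a binary $[N,K]$ code $\mathbf{D}$, $K\ge2$, with minimum nonzero weight $w_{min}$, maximum weight $w_{max}$ and $n'=2w_{min}-w_{max}\ge1$: choose a basis $\mathbf{r}_1,\dots,\mathbf{r}_K$ with $wt(\mathbf{r}_1)=w_{max}$, $wt(\mathbf{r}_2)=w_{min}$; the extended code is generated by $(\mathbf{1},\mathbf{r}_1),(\mathbf{0},\mathbf{r}_2),\dots,(\mathbf{0},\mathbf{r}_K)$ in $\mathbf{F}_2^{n'+N}$. Minimal code: nonzero codewords with nested supports are equal. Ashikhmin–Barg condition (binary): $w_{min}/w_{max}>1/2$. *)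

From mathcomp Require Import all_boot all_order all_algebra.
Set Implicit Arguments. Unset Strict Implicit. Unset Printing Implicit Defensive.
Import GRing.Theory Num.Theory.
Local Open Scope ring_scope.

Definition supp n (x : 'rV['F_2]_n) : {set 'I_n} := [set j | x 0 j != 0].
Definition wt n (x : 'rV['F_2]_n) : nat := #|supp x|.

(* The code generated by G : 'M_(k,n) is { u *m G | u : 'rV_k }. *)
Definition maxwt k n (G : 'M['F_2]_(k, n)) : nat :=
  \max_(u : 'rV['F_2]_k) wt (u *m G).
(* minimum nonzero weight (= minimum distance) of the code;
   the default value n is only used for the zero code *)
Definition minwt k n (G : 'M['F_2]_(k, n)) : nat :=
  \big[minn/n]_(u : 'rV['F_2]_k | (u *m G != 0)%R) wt (u *m G).

Definition projective k n (G : 'M['F_2]_(k, n)) : Prop :=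
  (forall j, col j G != 0) /\ injective (fun j => col j G).

Definition simplex_complement k n h N (G0 : 'M['F_2]_(k, n))
    (G1 : 'M['F_2]_(k + h, N)) : Prop :=
  injective (fun j => col j G1) /\
  forall v : 'cV['F_2]_(k + h),
    (exists j, col j G1 = v) <->
    (v != 0 /\ forall j, v <> col_mx (col j G0) (0 : 'cV['F_2]_h)).

(* R is a basis (rows r_1..r_K, indexed from 0) of the code generated by G
   with wt r_1 = maximum weight and wt r_2 = minimum weight. *)
Definition extension_basis K N (G R : 'M['F_2]_(K, N)) : Prop :=
  row_free R /\ (R == G)%MS /\
  (forall i : 'I_K, val i = 0%N -> wt (row i R) = maxwt G) /\
  (forall i : 'I_K, val i = 1%N -> wt (row i R) = minwt G).

Definition ext_matrix K N p (R : 'M['F_2]_(K, N)) : 'M['F_2]_(K, p + N) :=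
  row_mx (\matrix_(i < K, j < p) (if val i == 0%N then 1 else 0)) R.

Definition minimal_code k n (G : 'M['F_2]_(k, n)) : Prop :=
  forall u v : 'rV['F_2]_k, u *m G != 0 -> v *m G != 0 ->
    supp (u *m G) \subset supp (v *m G) -> u *m G = v *m G.

Definition ashikhmin_barg k n (G : 'M['F_2]_(k, n)) : Prop :=
  (1 / 2 : rat) < (minwt G)%:R / (maxwt G)%:R.

(* A nonzero
   linear form on F_2^K is nonzero on exactly 2^(K-1) vectors, so the codeword
   of G1 indexed by u = (a, b) <> 0 has weight 2^(K-1) - wt (a G0); hence
   w_min(G1) = 2^(K-1) - w_max(G0) and w_max(G1) = 2^(K-1).
   In the extension of any code with n' = 2 w_min - w_max > 0, a codeword with
   leading bit b has weight wt c + b n' with w_min <= wt c <= w_max.  Hence the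
   extended code has minimum weight w_min and maximum weight w_max + n' = 2 w_min,
   and its ratio w_min / w_max is exactly 1/2. *)

From mathcomp Require Import all_boot all_order all_algebra zify ring lra.
Set Implicit Arguments. Unset Strict Implicit. Unset Printing Implicit Defensive.
Import GRing.Theory Num.Theory.
Local Open Scope ring_scope.

Lemma pchar_F2 : (2 \in [pchar 'F_2])%N.
Proof. exact: pchar_Fp. Qed.

Lemma F2_neq0_eq1 (x : 'F_2) : x != 0 -> x = 1.
Proof. by case: x => [[|[|]]] //= ? ?; apply: val_inj. Qed.

Lemma oppmx_F2 m n (A : 'M['F_2]_(m, n)) : - A = A.
Proof. by apply/matrixP => i j; rewrite mxE (oppr_pchar2 pchar_F2). Qed.

Lemma addmx_F2_eq0 m n (A B : 'M['F_2]_(m, n)) : (A + B == 0) = (A == B).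
Proof. by rewrite addr_eq0 oppmx_F2. Qed.

Section Weight.

Variable n : nat.
Implicit Types x y : 'rV['F_2]_n.

Lemma wt_le_size x : (wt x <= n)%N.
Proof. by rewrite -[leqRHS]card_ord max_card. Qed.

Lemma wt_eq0 x : (wt x == 0%N) = (x == 0).
Proof.
rewrite cards_eq0; apply/eqP/eqP => [supp0|->]; last first.
  by apply/setP => j; rewrite !inE mxE eqxx.
apply/rowP => j; rewrite mxE; apply/eqP/negbNE/negP => xj.
by have : j \in supp x; [rewrite inE | rewrite supp0 inE].
Qed.

Lemma wt0 : wt (0 : 'rV['F_2]_n) = 0%N.
Proof. by apply/eqP; rewrite wt_eq0. Qed.

Lemma wt_sum x : wt x = (\sum_j (x 0%R j != 0%R))%N.
Proof. by rewrite /wt /supp -sum1_card big_mkcond; apply: eq_bigr => j _; rewrite inE. Qed.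

Lemma wt_const_mx (b : 'F_2) : wt (const_mx b : 'rV_n) = ((b != 0%R) * n)%N.
Proof.
rewrite wt_sum (eq_bigr (fun=> nat_of_bool (b != 0))) => [|j _]; last by rewrite mxE.
by rewrite sum_nat_const card_ord mulnC.
Qed.

(* In characteristic 2, x + y vanishes exactly on supp x inside supp y. *)
Lemma wt_nested x y : supp x \subset supp y -> wt y = (wt x + wt (x + y))%N.
Proof.
move=> sxy; have supp_add : supp (x + y) = supp y :\: supp x.
  apply/setP => j; rewrite !inE mxE.
  have [-> | xj] := eqVneq (x 0 j) 0; first by rewrite add0r.
  have yj : y 0 j != 0 by have := subsetP sxy j; rewrite !inE; apply.
  by rewrite (F2_neq0_eq1 xj) (F2_neq0_eq1 yj) (addrr_pchar2 pchar_F2) eqxx.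
by rewrite /wt supp_add -(cardsID (supp x) (supp y)) (setIidPr sxy).
Qed.

End Weight.

Lemma wt_row_mx n1 n2 (x : 'rV['F_2]_n1) (y : 'rV['F_2]_n2) :
  wt (row_mx x y) = (wt x + wt y)%N.
Proof.
rewrite !wt_sum big_split_ord; congr (_ + _)%N; apply: eq_bigr => j _.
  by rewrite row_mxEl.
by rewrite row_mxEr.
Qed.

Section CodeWeights.

Variables k n : nat.
Implicit Types G : 'M['F_2]_(k, n).

Lemma wt_le_maxwt G u : (wt (u *m G) <= maxwt G)%N.
Proof. exact: (@leq_bigmax _ (fun u => wt (u *m G))). Qed.

Lemma maxwt_attained G u0 w :
  wt (u0 *m G) = w -> (forall u, wt (u *m G) <= w)%N -> maxwt G = w.
Proof.
move=> <- wt_le; apply/eqP; rewrite eqn_leq wt_le_maxwt andbT.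
by apply/bigmax_leqP => u _.
Qed.

Lemma minwt_le_wt G u : u *m G != 0 -> (minwt G <= wt (u *m G))%N.
Proof.
move=> uG; rewrite /minwt; have : u \in index_enum _ := mem_index_enum u.
elim: (index_enum _) => // v r IHr; rewrite inE big_cons => /predU1P[<- | /IHr].
  by rewrite uG geq_minl.
by case: ifP => // _ /(leq_trans (geq_minr _ _)).
Qed.

Lemma minwt_le_size G : (minwt G <= n)%N.
Proof.
apply: (big_ind (leq^~ n)) => //= [a b a_le _ | u _]; first by rewrite geq_min a_le.
exact: wt_le_size.
Qed.

Lemma minwt_ge G w :
  (forall u, u *m G != 0 -> (w <= wt (u *m G))%N) -> (w <= n)%N -> (w <= minwt G)%N.
Proof.
by move=> wt_ge w_le; apply: (big_ind (leq w)) => // a b wa wb; rewrite leq_min wa.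
Qed.

Lemma minwt_attained G u0 w : u0 *m G != 0 -> wt (u0 *m G) = w ->
  (forall u, u *m G != 0 -> (w <= wt (u *m G))%N) -> minwt G = w.
Proof.
move=> u0G <- wt_ge; apply/eqP; rewrite eqn_leq minwt_le_wt //.
by rewrite minwt_ge // wt_le_size.
Qed.

Lemma wt_mul_col G u : wt (u *m G) = #|[set j | (u *m col j G) 0 0 != 0]|.
Proof.
apply: eq_card => j; rewrite !inE !mxE; congr (_ != 0).
by apply: eq_bigr => i _; rewrite !mxE.
Qed.

End CodeWeights.

Section SameCode.

Variables k1 k2 n : nat.
Variables (R : 'M['F_2]_(k1, n)) (G : 'M['F_2]_(k2, n)).

Lemma codeword_submx (u : 'rV_k1) : (R <= G)%MS -> exists v, u *m R = v *m G.
Proof. by case/submxP=> D ->; exists (u *m D); rewrite mulmxA. Qed.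

Lemma maxwt_submx : (R <= G)%MS -> (maxwt R <= maxwt G)%N.
Proof.
move=> sRG; apply/bigmax_leqP => u _.
by have [v ->] := codeword_submx u sRG; apply: wt_le_maxwt.
Qed.

Lemma minwt_submx : (R <= G)%MS -> (minwt G <= minwt R)%N.
Proof.
move=> sRG; rewrite minwt_ge ?minwt_le_size // => u.
by have [v ->] := codeword_submx u sRG; apply: minwt_le_wt.
Qed.

End SameCode.

Lemma maxwt_eqmx k1 k2 n (R : 'M['F_2]_(k1, n)) (G : 'M['F_2]_(k2, n)) :
  (R == G)%MS -> maxwt R = maxwt G.
Proof. by case/andP=> sRG sGR; apply/eqP; rewrite eqn_leq !maxwt_submx. Qed.

Lemma minwt_eqmx k1 k2 n (R : 'M['F_2]_(k1, n)) (G : 'M['F_2]_(k2, n)) :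
  (R == G)%MS -> minwt R = minwt G.
Proof. by case/andP=> sRG sGR; apply/eqP; rewrite eqn_leq !minwt_submx. Qed.

(* Translating by a vector on which the form is 1 swaps its two level sets. *)
Lemma card_form_neq0 K (u : 'rV['F_2]_K) : u != 0 ->
  #|[set v : 'cV['F_2]_K | (u *m v) 0 0 != 0]| = (2 ^ K.-1)%N.
Proof.
move=> u_neq0; set S := [set v | _].
have [i ui] : exists i, u 0 i != 0.
  apply/existsP; apply: contraR u_neq0 => /existsPn u0.
  by apply/eqP/rowP => i; rewrite mxE; apply/eqP/negbNE.
pose e : 'cV['F_2]_K := delta_mx i 0.
have ue : (u *m e) 0 0 = 1 by rewrite -colE mxE (F2_neq0_eq1 ui).
have form_add v : (u *m (v + e)) 0 0 = (u *m v) 0 0 + 1 by rewrite mulmxDr mxE ue.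
have S_shift : [set v + e | v in ~: S] = S.
  apply/setP => v; rewrite inE; apply/imsetP/idP => [[w] | Sv].
    by rewrite !inE negbK => /eqP Sw ->; rewrite form_add Sw add0r oner_eq0.
  exists (v + e); last by rewrite -{2}(oppmx_F2 e) addrK.
  by rewrite !inE negbK form_add (F2_neq0_eq1 Sv) (addrr_pchar2 pchar_F2).
have cardS : #|S| = #|~: S| by rewrite -{1}S_shift card_imset //; apply: addIr.
have K_gt0 : (0 < K)%N by apply: leq_ltn_trans (ltn_ord i).
have pow_K : (2 ^ K = 2 * 2 ^ K.-1)%N by rewrite -expnS prednK.
by have := cardsC S; rewrite -cardS card_mx card_Fp // muln1 pow_K; lia.
Qed.

Section SimplexComplement.

Variables k n h N : nat.
Variables (G0 : 'M['F_2]_(k, n)) (G1 : 'M['F_2]_(k + h, N)).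
Hypothesis G0_inj : injective (fun j => col j G0).
Hypothesis G1_compl : simplex_complement G0 G1.

Lemma wt_simplex_complement (u : 'rV_(k + h)) : u != 0 ->
  wt (u *m G1) = (2 ^ (k + h).-1 - wt (lsubmx u *m G0))%N.
Proof.
move=> u_neq0; have [G1_inj G1_cols] := G1_compl.
pose pad j : 'cV['F_2]_(k + h) := col_mx (col j G0) 0.
have pad_inj : injective pad.
  by move=> j1 j2 /(congr1 (@usubmx _ k h 1)); rewrite !col_mxKu; apply: G0_inj.
have form_pad j : u *m pad j = lsubmx u *m col j G0.
  by rewrite -{1}(hsubmxK u) mul_row_col mulmx0 addr0.
pose S := [set v : 'cV['F_2]_(k + h) | (u *m v) 0 0 != 0].
pose Pad := [set pad j | j : 'I_n].
have S_cols : [set col j G1 | j in [set j | (u *m col j G1) 0 0 != 0]] = S :\: Pad.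
  apply/setP => v; rewrite inE; apply/imsetP/andP => [[j] | [Pad'v Sv]].
    rewrite inE => Sj ->; split; last by rewrite inE.
    apply/negP => /imsetP[j' _]; have [_] := (G1_cols _).1 (ex_intro _ j erefl).
    by move/(_ j').
  have v_neq0 : v != 0 by apply: contraTneq Sv => ->; rewrite inE mulmx0 mxE eqxx.
  have Pad_v j : v <> pad j by move=> vj; apply/(negP Pad'v)/imsetP; exists j.
  have [j vj] := (G1_cols v).2 (conj v_neq0 Pad_v).
  by exists j; move: Sv; rewrite !inE vj.
have S_Pad : S :&: Pad = [set pad j | j in [set j | pad j \in S]].
  apply/setP => v; rewrite inE; apply/andP/imsetP => [[Sv /imsetP[j _ vj]] | [j]].
    by exists j; rewrite // inE -vj.
  by rewrite inE => Sj ->; rewrite Sj imset_f.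
rewrite wt_mul_col -(card_imset _ G1_inj) S_cols cardsD S_Pad card_imset //.
rewrite card_form_neq0 // wt_mul_col; congr (_ - _)%N.
by apply: eq_card => j; rewrite !inE form_pad.
Qed.

Hypothesis h_gt0 : (0 < h)%N.

Let row_mx_const1_neq0 (a : 'rV['F_2]_k) : row_mx a (const_mx 1 : 'rV_h) != 0.
Proof.
rewrite row_mx_eq0 negb_and; apply/orP; right; apply/eqP => /rowP /(_ (Ordinal h_gt0)).
by rewrite !mxE; apply/eqP/oner_neq0.
Qed.

Lemma maxwt_simplex_complement : maxwt G1 = (2 ^ (k + h).-1)%N.
Proof.
apply: (maxwt_attained (u0 := row_mx 0 (const_mx 1))).
  by rewrite wt_simplex_complement ?row_mx_const1_neq0 // row_mxKl mul0mx wt0 subn0.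
move=> u; have [-> | u_neq0] := eqVneq u 0; first by rewrite mul0mx wt0.
by rewrite wt_simplex_complement ?leq_subr.
Qed.

Hypothesis maxwt_G0_lt : (maxwt G0 < 2 ^ (k + h).-1)%N.

Lemma wt_simplex_complement_ge (u : 'rV_(k + h)) : u != 0 ->
  (2 ^ (k + h).-1 - maxwt G0 <= wt (u *m G1))%N.
Proof.
by move=> u_neq0; rewrite wt_simplex_complement // leq_sub2l ?wt_le_maxwt.
Qed.

Lemma simplex_complement_mul_eq0 (u : 'rV_(k + h)) : (u *m G1 == 0) = (u == 0).
Proof.
have [-> | u_neq0] := eqVneq u 0; first by rewrite mul0mx eqxx.
apply/negbTE; rewrite -wt_eq0 -lt0n.
apply: leq_trans (wt_simplex_complement_ge u_neq0).
by rewrite subn_gt0.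
Qed.

Lemma rank_simplex_complement : \rank G1 = (k + h)%N.
Proof.
by apply/eqP/inj_row_free => u /eqP; rewrite simplex_complement_mul_eq0 => /eqP.
Qed.

Lemma minwt_simplex_complement : minwt G1 = (2 ^ (k + h).-1 - maxwt G0)%N.
Proof.
have rV_gt0 : (0 < #|{: 'rV['F_2]_k}|)%N by apply/card_gt0P; exists 0.
have [a a_max] := eq_bigmax (fun a => wt (a *m G0)) rV_gt0.
apply: (minwt_attained (u0 := row_mx a (const_mx 1))).
- by rewrite simplex_complement_mul_eq0 row_mx_const1_neq0.
- by rewrite wt_simplex_complement ?row_mx_const1_neq0 // row_mxKl -a_max.
by move=> u; rewrite simplex_complement_mul_eq0; apply: wt_simplex_complement_ge.
Qed.

End SimplexComplement.

Lemma ratio_half_not_ashikhmin_barg k n (G : 'M['F_2]_(k, n)) :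
  maxwt G = (2 * minwt G)%N -> ~ ashikhmin_barg G.
Proof.
rewrite /ashikhmin_barg => ->; rewrite natrM.
have [-> | w_gt0] := posnP (minwt G); first by rewrite mul0r; lra.
have w_neq0 : (minwt G)%:R != 0 :> rat by rewrite pnatr_eq0 -lt0n.
have -> : (minwt G)%:R / (2%:R * (minwt G)%:R) = 1 / 2 :> rat by field.
lra.
Qed.

Section Extension.

Variables K N p : nat.
Variables (R : 'M['F_2]_(K, N)) (r1 : 'I_K).
Hypothesis r1_0 : val r1 = 0%N.
Hypothesis R_free : row_free R.
Hypothesis p_gt0 : (0 < p)%N.
Hypothesis p_def : (p + maxwt R = 2 * minwt R)%N.

Local Notation C := (ext_matrix p R).

Lemma ext_matrix_mul (u : 'rV_K) : u *m C = row_mx (const_mx (u 0 r1)) (u *m R).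
Proof.
rewrite mul_mx_row; congr row_mx; apply/rowP => j.
rewrite !mxE (bigD1 r1) //= big1 => [|i i_neq_r1]; rewrite !mxE.
  by rewrite r1_0 eqxx mulr1 addr0.
have i_neq0 : (val i == 0%N) = false by rewrite -r1_0 (inj_eq val_inj) (negbTE i_neq_r1).
by rewrite i_neq0 mulr0.
Qed.

Lemma wt_ext_matrix (u : 'rV_K) :
  wt (u *m C) = (wt (u *m R) + (u 0%R r1 != 0%R) * p)%N.
Proof. by rewrite ext_matrix_mul wt_row_mx wt_const_mx addnC. Qed.

Lemma wt_ext_matrix_bounds (u : 'rV_K) : u != 0 ->
  (minwt R + (u 0%R r1 != 0%R) * p <= wt (u *m C) <= maxwt R + (u 0%R r1 != 0%R) * p)%N.
Proof.
move=> u_neq0; have uR : u *m R != 0 by rewrite mulmx_free_eq0.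
by rewrite wt_ext_matrix !leq_add2r minwt_le_wt ?wt_le_maxwt.
Qed.

Lemma ext_matrix_mul_eq0 (u : 'rV_K) : (u *m C == 0) = (u == 0).
Proof.
have [-> | u_neq0] := eqVneq u 0; first by rewrite mul0mx eqxx.
by rewrite ext_matrix_mul row_mx_eq0 mulmx_free_eq0 // (negbTE u_neq0) andbF.
Qed.

Lemma rank_ext_matrix : \rank C = K.
Proof.
by apply/eqP/inj_row_free => u /eqP; rewrite ext_matrix_mul_eq0 => /eqP.
Qed.

(* If supp (u C) lies inside supp (v C) and they differ, then
   wt (v C) = wt (u C) + wt ((u + v) C) >= 2 w_min, whereas
   wt (v C) <= w_max + p = 2 w_min only when the leading bit of v is set, and
   then u or u + v also has its leading bit set, adding p > 0 to the bound. *)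
Lemma ext_matrix_minimal : minimal_code C.
Proof.
move=> u v uC vC /wt_nested; rewrite -mulmxDl; set w := (u + v)%R => wt_v.
apply/eqP/negPn/negP => uC_neq_vC.
have wC : w *m C != 0 by rewrite mulmxDl addmx_F2_eq0.
move: uC vC wC wt_v; rewrite !ext_matrix_mul_eq0.
move=> /wt_ext_matrix_bounds/andP[u_ge _] /wt_ext_matrix_bounds/andP[_ v_le].
move=> /wt_ext_matrix_bounds/andP[w_ge _] wt_v.
set bu := nat_of_bool (u 0 r1 != 0) in u_ge.
set bv := nat_of_bool (v 0 r1 != 0) in v_le.
set bw := nat_of_bool (w 0 r1 != 0) in w_ge.
have lead : (bv <= bu + bw)%N.
  rewrite /bu /bv /bw mxE; have [-> | _] := eqVneq (u 0 r1) 0; first by rewrite add0r.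
  exact: leq_trans (leq_b1 _) (leq_addr _ _).
have := leq_mul lead (leqnn p); rewrite mulnDl; lia.
Qed.

Variable r2 : 'I_K.
Hypothesis r2_neq_r1 : r2 != r1.
Hypothesis wt_r1 : wt (row r1 R) = maxwt R.
Hypothesis wt_r2 : wt (row r2 R) = minwt R.

Lemma minwt_ext_matrix : minwt C = minwt R.
Proof.
apply: (minwt_attained (u0 := delta_mx 0 r2)).
- by rewrite ext_matrix_mul_eq0; apply/eqP => /matrixP /(_ 0 r2); rewrite !mxE !eqxx.
- by rewrite wt_ext_matrix -rowE wt_r2 mxE eqxx [r1 == r2]eq_sym (negbTE r2_neq_r1) eqxx addn0.
move=> u; rewrite ext_matrix_mul_eq0 => /wt_ext_matrix_bounds /andP[+ _].
exact/leq_trans/leq_addr.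
Qed.

Lemma maxwt_ext_matrix : maxwt C = (2 * minwt R)%N.
Proof.
apply: (maxwt_attained (u0 := delta_mx 0 r1)).
  by rewrite wt_ext_matrix -rowE wt_r1 mxE !eqxx mul1n addnC.
move=> u; have [-> | u_neq0] := eqVneq u 0; first by rewrite mul0mx wt0.
case/andP: (wt_ext_matrix_bounds u_neq0) => _ /leq_trans; apply.
by rewrite -p_def addnC leq_add2r; case: (_ != 0); rewrite ?mul1n ?mul0n.
Qed.

End Extension.

Lemma extension_construction K N p (G R : 'M['F_2]_(K, N)) :
  extension_basis G R -> (1 < K)%N -> (0 < p)%N -> (p + maxwt G = 2 * minwt G)%N ->
  let C := ext_matrix p R in
  [/\ minimal_code C, \rank C = K, minwt C = minwt G, maxwt C = (2 * minwt G)%N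
    & ~ ashikhmin_barg C].
Proof.
move=> [R_free [R_G [wt_r1 wt_r2]]] K_gt1 p_gt0 p_def C.
rewrite -(minwt_eqmx R_G) -(maxwt_eqmx R_G) in p_def *.
pose r1 : 'I_K := Ordinal (ltnW K_gt1); pose r2 : 'I_K := Ordinal K_gt1.
have r1_0 : val r1 = 0%N by [].
have r2_neq_r1 : r2 != r1 by [].
have wt_R1 : wt (row r1 R) = maxwt R by rewrite wt_r1 // (maxwt_eqmx R_G).
have wt_R2 : wt (row r2 R) = minwt R by rewrite wt_r2 // (minwt_eqmx R_G).
have minC := minwt_ext_matrix p r1_0 R_free r2_neq_r1 wt_R2.
have maxC := maxwt_ext_matrix r1_0 R_free p_def wt_R1.
split => //.
- exact (ext_matrix_minimal r1_0 R_free p_gt0 p_def).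
- exact (rank_ext_matrix p r1_0 R_free).
by apply: ratio_half_not_ashikhmin_barg; rewrite maxC minC.
Qed.

Lemma exp2_weight_facts m h : (5 <= m)%N -> (1 <= h)%N ->
  [/\ 2 ^ (m - 2) = 2 * 2 ^ (m - 3), 2 ^ ((m - 1) %/ 2) = 2 * 2 ^ ((m - 3) %/ 2),
      2 ^ (m + h - 1) = 2 * 2 ^ (m + h - 2), 2 * 2 ^ ((m - 3) %/ 2) <= 2 ^ (m - 3)
    & 4 * 2 ^ (m - 3) <= 2 ^ (m + h - 2)]%N.
Proof.
move=> m_ge5 h_ge1; rewrite -!expnS -[4%N]/(2 ^ 2)%N -expnD !leq_exp2l //.
by split; try congr (2 ^ _)%N; lia.
Qed.

Lemma weight_arith (p q P : nat) : (0 < q)%N -> (2 * q <= p)%N -> (4 * p <= P)%N ->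
  [/\ p + q < P, 0 < P - 2 * p - 2 * q & P - 2 * p - 2 * q + P = 2 * (P - (p + q))]%N.
Proof. by move=> *; split; lia. Qed.

Theorem proposition4p5 (m h : nat) :
  odd m -> (5 <= m)%N -> (1 <= h)%N ->
  forall G0 : 'M['F_2]_(m - 1, 2 ^ (m - 2)),
    projective G0 -> \rank G0 = (m - 1)%N ->
    minwt G0 = (2 ^ (m - 3) - 2 ^ ((m - 3) %/ 2))%N ->
    maxwt G0 = (2 ^ (m - 3) + 2 ^ ((m - 3) %/ 2))%N ->
  forall G1 : 'M['F_2]_(m - 1 + h, 2 ^ (m + h - 1) - 2 ^ (m - 2) - 1),
    simplex_complement G0 G1 ->
  let n' := (2 ^ (m + h - 2) - 2 ^ (m - 2) - 2 ^ ((m - 1) %/ 2))%N in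
  [/\ \rank G1 = (m - 1 + h)%N,
      minwt G1 = (2 ^ (m + h - 2) - 2 ^ (m - 3) - 2 ^ ((m - 3) %/ 2))%N,
      maxwt G1 = (2 ^ (m + h - 2))%N,
      (2 * minwt G1 - maxwt G1)%N = n' &
      forall R : 'M['F_2]_(m - 1 + h, 2 ^ (m + h - 1) - 2 ^ (m - 2) - 1),
        extension_basis G1 R ->
        let C' := ext_matrix n' R in
        [/\ minimal_code C',
            \rank C' = (m - 1 + h)%N,
            minwt C' = (2 ^ (m + h - 2) - 2 ^ (m - 3) - 2 ^ ((m - 3) %/ 2))%N,
            maxwt C' = (2 ^ (m + h - 1) - 2 ^ (m - 2) - 2 ^ ((m - 1) %/ 2))%N /\
            maxwt C' = (2 ^ (m + h - 2) + n')%N &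
            ~ ashikhmin_barg C']].
Proof.
move=> _ m_ge5 h_ge1 G0 [_ G0_inj] _ _ maxwt_G0 G1 G1_compl n'.
have [pow_m2 pow_half pow_mh half_le P_ge] := exp2_weight_facts m_ge5 h_ge1.
have [maxwt_G0_lt n'_gt0 n'_sum] := weight_arith (expn_gt0 2 ((m - 3) %/ 2)) half_le P_ge.
have dim1 : (m - 1 + h).-1 = (m + h - 2)%N by lia.
rewrite -dim1 -maxwt_G0 in maxwt_G0_lt.
have min1 := minwt_simplex_complement G0_inj G1_compl h_ge1 maxwt_G0_lt.
have max1 := maxwt_simplex_complement G0_inj G1_compl h_ge1.
rewrite {}dim1 maxwt_G0 in min1 max1.
rewrite -pow_m2 -pow_half -/n' in n'_gt0 n'_sum.
have n'_def : (n' + maxwt G1 = 2 * minwt G1)%N by rewrite min1 max1.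
split=> //.
- exact: rank_simplex_complement G0_inj G1_compl maxwt_G0_lt.
- by rewrite min1 subnDA.
- by rewrite -n'_def addnK.
move=> R R_basis C'.
have dim_gt1 : (1 < m - 1 + h)%N by lia.
have [? ? minC' maxC' ?] := extension_construction R_basis dim_gt1 n'_gt0 n'_def.
split => //; first by rewrite minC' min1 subnDA.
rewrite maxC' min1; split; last by rewrite -n'_sum addnC.
by rewrite pow_m2 pow_half pow_mh mulnBr mulnDr subnDA.
Qed.
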